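(* Let $\varphi$ and $\psi$ be metric formulas without implication (and hence without negation). Then $\varphi\equiv\psi$ in MTL iff $\varphi\equiv\psi$ in MHT.
   Context: Metric formulas over $\mathcal{A}$: $\varphi ::= p \mid \bot \mid \varphi_1\otimes\varphi_2 \mid \bullet_I\varphi \mid \varphi_1\,\mathsf{S}_I\,\varphi_2 \mid \varphi_1\,\mathsf{T}_I\,\varphi_2 \mid \bigcirc_I\varphi \mid \varphi_1\,\mathsf{U}_I\,\varphi_2 \mid \varphi_1\,\mathsf{R}_I\,\varphi_2$, $\otimes\in\{\to,\wedge,\vee\}$, $I=[m,n)$, $m\in\mathbb{N}$, $n\in\mathbb{N}\cup\{\omega\}$; derived operators include $\neg\varphi=\varphi\to\bot$, $\top=\neg\bot$, $\blacksquare_I\varphi=\bot\,\mathsf{T}_I\,\varphi$, eventually before $\top\,\mathsf{S}_I\,\varphi$, $\Box_I\varphi=\bot\,\mathsf{R}_I\,\varphi$, $\Diamond_I\varphi=\top\,\mathsf{U}_I\,\varphi$. Timed HT-trace $\mathbf{M}=(\langle\mathbf{H},\mathbf{T}\rangle,\tau)$ of length $\lambda\in\mathbb{N}\cup\{\omega\}$: $H_i\subseteq T_i\subseteq\mathcal{A}$, $\tau:[0,\lambda)\to\mathbb{N}$, $\tau(0)=0$, $\tau(i)\le\tau(i+1)$; total if $\mathbf{H}=\mathbf{T}$. Satisfaction at $k$: $\bot$ never; $p$ iff $p\in H_k$; $\wedge,\vee$ usual; $\varphi\to\psi$ iff for both $\mathbf{M}'=\mathbf{M}$ and $\mathbf{M}'=(\langle\mathbf{T},\mathbf{T}\rangle,\tau)$,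 $\mathbf{M}',k\not\models\varphi$ or $\mathbf{M}',k\models\psi$; $\bullet_I\varphi$: $k>0$, $\varphi$ at $k-1$, $\tau(k)-\tau(k-1)\in I$; $\varphi\,\mathsf{S}_I\,\psi$: some $j\in[0,k]$ with $\tau(k)-\tau(j)\in I$, $\psi$ at $j$, $\varphi$ at all $i\in(j,k]$; $\varphi\,\mathsf{T}_I\,\psi$: for all such $j$, $\psi$ at $j$ or $\varphi$ at some $i\in(j,k]$; $\bigcirc_I\varphi$: $k+1<\lambda$, $\varphi$ at $k+1$, $\tau(k+1)-\tau(k)\in I$; $\varphi\,\mathsf{U}_I\,\psi$: some $j\in[k,\lambda)$ with $\tau(j)-\tau(k)\in I$, $\psi$ at $j$, $\varphi$ at all $i\in[k,j)$; $\varphi\,\mathsf{R}_I\,\psi$: for all such $j$, $\psi$ at $j$ or $\varphi$ at some $i\in[k,j)$. Equivalence in MHT: $\mathbf{M},k\models\varphi\leftrightarrow\psi$ for all timed HT-traces and all $k$; MTL (metric temporal logic) is the restriction to total traces, so equivalence in MTL quantifies only over total traces. *)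

From Stdlib Require Import Arith Lia.

Set Implicit Arguments.

(* Interval I = [m, n) with m : nat and n : nat or omega (None). *)
Record interval := mkInterval { ilow : nat; ihigh : option nat }.

Definition in_interval (I : interval) (d : nat) : Prop :=
  ilow I <= d /\ match ihigh I with None => True | Some n => d < n end.

Inductive formula (A : Type) : Type :=
| Atom : A -> formula A
| Bot : formula A
| Impl : formula A -> formula A -> formula A
| And : formula A -> formula A -> formula A
| Or : formula A -> formula A -> formula A
| Prev : interval -> formula A -> formula A
| Since : interval -> formula A -> formula A -> formula A
| Trigger : interval -> formula A -> formula A -> formula A
| Next : interval -> formula A -> formula A
| Until : interval -> formula A -> formula A -> formula A
| Release : interval -> formula A -> formula A -> formula A.

Arguments Bot {A}.

Fixpoint impl_free (A : Type) (f : formula A) : Prop :=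
  match f with
  | Atom _ | Bot => True
  | Impl _ _ => False
  | And f g | Or f g => impl_free f /\ impl_free g
  | Prev _ f | Next _ f => impl_free f
  | Since _ f g | Trigger _ f g | Until _ f g | Release _ f g =>
      impl_free f /\ impl_free g
  end.

(* Trace length lambda in N u {omega}: None = omega. *)
Definition in_len (lam : option nat) (i : nat) : Prop :=
  match lam with None => True | Some n => i < n end.

(* Timed HT-trace: length, timing function, here-sets H_i, there-sets T_i.
   Values at positions outside [0, lambda) are irrelevant. *)
Record timed_trace (A : Type) := mkTrace {
  len : option nat;
  tau : nat -> nat;
  Hs : nat -> A -> Prop;
  Ts : nat -> A -> Prop }.

Definition valid_trace (A : Type) (M : timed_trace A) : Prop :=
  tau M 0 = 0 /\
  (forall i, in_len (len M) (i + 1) -> tau M i <= tau M (i + 1)) /\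
  (forall i, in_len (len M) i -> forall p, Hs M i p -> Ts M i p).

Definition total (A : Type) (M : timed_trace A) : Prop := Hs M = Ts M.

Fixpoint sat (A : Type) (lam : option nat) (tau : nat -> nat)
    (H T : nat -> A -> Prop) (k : nat) (f : formula A) {struct f} : Prop :=
  match f with
  | Atom p => H k p
  | Bot => False
  | And f g => sat lam tau H T k f /\ sat lam tau H T k g
  | Or f g => sat lam tau H T k f \/ sat lam tau H T k g
  | Impl f g =>
      (~ sat lam tau H T k f \/ sat lam tau H T k g) /\
      (~ sat lam tau T T k f \/ sat lam tau T T k g)
  | Prev iv f =>
      0 < k /\ sat lam tau H T (k - 1) f /\ in_interval iv (tau k - tau (k - 1))
  | Since iv f g =>
      exists j, j <= k /\ in_interval iv (tau k - tau j) /\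
        sat lam tau H T j g /\
        (forall i, j < i <= k -> sat lam tau H T i f)
  | Trigger iv f g =>
      forall j, j <= k -> in_interval iv (tau k - tau j) ->
        sat lam tau H T j g \/
        (exists i, j < i <= k /\ sat lam tau H T i f)
  | Next iv f =>
      in_len lam (k + 1) /\ sat lam tau H T (k + 1) f /\
      in_interval iv (tau (k + 1) - tau k)
  | Until iv f g =>
      exists j, k <= j /\ in_len lam j /\ in_interval iv (tau j - tau k) /\
        sat lam tau H T j g /\
        (forall i, k <= i < j -> sat lam tau H T i f)
  | Release iv f g =>
      forall j, k <= j -> in_len lam j -> in_interval iv (tau j - tau k) ->
        sat lam tau H T j g \/
        (exists i, k <= i < j /\ sat lam tau H T i f)
  end.

Definition satM (A : Type) (M : timed_trace A) (k : nat) (f : formula A) : Prop :=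
  sat (len M) (tau M) (Hs M) (Ts M) k f.

Definition Iff (A : Type) (f g : formula A) : formula A :=
  And (Impl f g) (Impl g f).

Definition equiv_MHT (A : Type) (f g : formula A) : Prop :=
  forall M : timed_trace A, valid_trace M ->
    forall k, in_len (len M) k -> satM M k (Iff f g).

Definition equiv_MTL (A : Type) (f g : formula A) : Prop :=
  forall M : timed_trace A, valid_trace M -> total M ->
    forall k, in_len (len M) k -> satM M k (Iff f g).

(** Without implication, the there-sets [T] are never consulted, so an
    implication-free formula holds in ⟨H, T⟩ exactly when it holds in the
    total trace ⟨H, H⟩.  Hence an equivalence [phi <-> psi] of such formulas
    holds in ⟨H, T⟩ iff it holds in the two total traces ⟨H, H⟩ and ⟨T, T⟩,
    and MTL-equivalence already gives MHT-equivalence. *)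

Lemma sat_impl_free_there {A : Type} lam tau (H : nat -> A -> Prop) (f : formula A) :
  impl_free f -> forall T T' k, sat lam tau H T k f -> sat lam tau H T' k f.
Proof.
  induction f; simpl; intros Hf T T' k; try tauto; firstorder eauto.
Qed.

Lemma sat_impl_free_thereE {A : Type} lam tau (H T T' : nat -> A -> Prop) k f :
  impl_free f -> (sat lam tau H T k f <-> sat lam tau H T' k f).
Proof. intro Hf; split; apply sat_impl_free_there; exact Hf. Qed.

Lemma sat_Impl_impl_free {A : Type} lam tau (H T : nat -> A -> Prop) k f g :
  impl_free f -> impl_free g ->
  sat lam tau H T k (Impl f g) <->
  sat lam tau H H k (Impl f g) /\ sat lam tau T T k (Impl f g).
Proof.
  intros Hf Hg; simpl.
  rewrite (sat_impl_free_thereE lam tau H T H k f Hf),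
          (sat_impl_free_thereE lam tau H T H k g Hg).
  tauto.
Qed.

Lemma sat_Iff_impl_free {A : Type} lam tau (H T : nat -> A -> Prop) k f g :
  impl_free f -> impl_free g ->
  sat lam tau H T k (Iff f g) <->
  sat lam tau H H k (Iff f g) /\ sat lam tau T T k (Iff f g).
Proof.
  intros Hf Hg; unfold Iff; simpl.
  rewrite (sat_Impl_impl_free lam tau H T k f g Hf Hg),
          (sat_Impl_impl_free lam tau H T k g f Hg Hf).
  simpl; tauto.
Qed.

Definition total_trace {A : Type} (M : timed_trace A) (X : nat -> A -> Prop) :
  timed_trace A := mkTrace (len M) (tau M) X X.

Lemma valid_total_trace {A : Type} (M : timed_trace A) X :
  valid_trace M -> valid_trace (total_trace M X).
Proof. intros [tau0 [tau_mono _]]; repeat split; auto. Qed.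

Lemma total_total_trace {A : Type} (M : timed_trace A) X : total (total_trace M X).
Proof. reflexivity. Qed.

Theorem proposition6 (A : Type) (phi psi : formula A) :
  impl_free phi -> impl_free psi ->
  (equiv_MTL phi psi <-> equiv_MHT phi psi).
Proof.
  intros Hphi Hpsi; split.
  - intros E M HM k Hk; unfold satM.
    apply sat_Iff_impl_free; [exact Hphi | exact Hpsi | split].
    + exact (E (total_trace M (Hs M)) (valid_total_trace _ _ HM)
               (total_total_trace M _) k Hk).
    + exact (E (total_trace M (Ts M)) (valid_total_trace _ _ HM)
               (total_total_trace M _) k Hk).
  - intros E M HM _ k Hk; exact (E M HM k Hk).
Qed.
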